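(* Let $M,n,p$ be positive integers with $n+p<M$. Let $A$ ($n\times(n+p)$), $G$ ($(M-n)\times(n+p)$), $D$ ($(M-n)\times(M-n-p)$) be real matrices with $K_0=\begin{pmatrix} A&0\\ G&D\end{pmatrix}$ invertible. For a real $n\times(M-n-p)$ matrix $B$ let $K=\begin{pmatrix} A&B\\ G&D\end{pmatrix}$ and, when $K$ is invertible, write $K^{-1}=\begin{pmatrix} E&C\\ H&F\end{pmatrix}$ with $C$ of size $(n+p)\times(M-n)$, $E$ of size $(n+p)\times n$, $H$ of size $(M-n-p)\times n$, $F$ of size $(M-n-p)\times(M-n)$. Let $L$ be a best rank-$p$ approximation of $C$ obtained by truncating a singular value decomposition of $C$ (so $\operatorname{rank}L\le p$ and $\|C-L\|=\sigma_{p+1}(C)$), and set $J=\begin{pmatrix} E&L\\ H&F\end{pmatrix}$. Then there is $\epsilon_0>0$ such that whenever $\|B\|\le\epsilon_0$: $K$ and $J$ are invertible, $J^{-1}=\begin{pmatrix} \tilde A&0\\ \tilde G&\tilde D\end{pmatrix}$ for some matrices $\tilde A$ ($n\times(n+p)$), $\tilde G$ ($(M-n)\times(n+p)$), $\tilde D$ ($(M-n)\times(M-n-p)$) (i.e. the upper-right $n\times(M-n-p)$ block of $J^{-1}$ vanishes), and $$B=A(L-C)\tilde D,\qquad A-\tilde A=A(L-C)\tilde G.$$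
   Context: $\|\cdot\|$ is the spectral norm; $\sigma_k(X)$ denotes the $k$-th largest singular value of a matrix $X$. *)

(* Real matrices are taken over an arbitrary real closed field. *)
From HB Require Import structures.
From mathcomp Require Import all_boot all_order all_algebra.
Set Implicit Arguments. Unset Strict Implicit. Unset Printing Implicit Defensive.
Import Order.TTheory GRing.Theory Num.Theory.
Local Open Scope ring_scope.

(* Y is a two-sided inverse of X (X need not have a syntactically square type). *)
Definition is_inverse (R : comRingType) (a c : nat)
  (X : 'M[R]_(a, c)) (Y : 'M[R]_(c, a)) : Prop :=
  X *m Y = 1%:M /\ Y *m X = 1%:M.

Definition invertible (R : comRingType) (a c : nat) (X : 'M[R]_(a, c)) : Prop :=
  exists Y : 'M[R]_(c, a), is_inverse X Y.

Definition sqnorm (R : comRingType) (c : nat) (x : 'cV[R]_c) : R :=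
  \sum_(i < c) x i 0 ^+ 2.

Definition spec_norm_le (R : realFieldType) (a c : nat) (X : 'M[R]_(a, c)) (e : R) : Prop :=
  0 <= e /\ forall x : 'cV[R]_c, sqnorm (X *m x) <= e ^+ 2 * sqnorm x.

Definition orthogonal_mx (R : comRingType) (k : nat) (U : 'M[R]_k) : Prop :=
  U *m U^T = 1%:M /\ U^T *m U = 1%:M.

Definition sv_diag (R : realFieldType) (r s : nat) (S : 'M[R]_(r, s)) : Prop :=
  (forall (i : 'I_r) (j : 'I_s), nat_of_ord i <> nat_of_ord j -> S i j = 0) /\
  (forall (i : 'I_r) (j : 'I_s), nat_of_ord i = nat_of_ord j -> 0 <= S i j) /\
  (forall (i k : 'I_r) (j l : 'I_s),
      nat_of_ord i = nat_of_ord j -> nat_of_ord k = nat_of_ord l ->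
      (nat_of_ord i <= nat_of_ord k)%N -> S k l <= S i j).

Definition trunc_sv (R : realFieldType) (r s : nat) (p : nat) (S : 'M[R]_(r, s)) : 'M[R]_(r, s) :=
  \matrix_(i < r, j < s) (if (i < p)%N then S i j else 0).

Definition trunc_svd (R : realFieldType) (r s : nat) (p : nat)
  (C L : 'M[R]_(r, s)) : Prop :=
  exists (U : 'M[R]_r) (V : 'M[R]_s) (S : 'M[R]_(r, s)),
    orthogonal_mx U /\ orthogonal_mx V /\ sv_diag S /\
    C = U *m S *m V^T /\ L = U *m trunc_sv p S *m V^T.

From HB Require Import structures.
From mathcomp Require Import all_boot all_order all_algebra ring lra.
Set Implicit Arguments. Unset Strict Implicit. Unset Printing Implicit Defensive.
Import Order.TTheory GRing.Theory Num.Theory.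
Local Open Scope ring_scope.

(* Write K = [A B; G D] = K0 + [0 B; 0 0] and K^-1 = [E C; H F].  Norm
   estimates are phrased as [sqbound X c] ("||X||^2 <= c") and obtained from
   Frobenius norms, so that every constant is explicit.
   1. For ||B|| small, K is a small perturbation of K0, hence invertible with
      ||K^-1||^2 <= 4 ||K0^-1||_F^2 (perturb_lower_bound).
   2. A C = - B F and A has a right inverse (a block of K0^-1), so the
      (p+1)-st singular value of C is O(||B||) (sigma_of_inverse); the lower
      bound on that singular value is a dimension count (large_direction).
   3. Let Z span the left singular vectors discarded by L.  From E A + C G = 1,
      Z^T E A Z = 1 - Z^T (C - L) G Z is invertible for ||B|| small, so
      P = (Z^T E)^-1 Z^T satisfies P E = 1 and P L = 0 (left_annihilator).
   4. J = K^-1 + [0 (L - C); 0 0] is invertible as ||K|| ||L - C|| < 1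
      (invertible_update); the algebraic lemma updated_inverse then reads off
      the vanishing block of J^-1 from P, and the two identities from
      J^-1 + K [0 (L - C); 0 0] J^-1 = K. *)

Section SquaredNorms.
Variable R : realFieldType.

Lemma cauchy_schwarz k (a b : 'I_k -> R) :
  (\sum_i a i * b i) ^+ 2 <= (\sum_i a i ^+ 2) * (\sum_i b i ^+ 2).
Proof.
set A := \sum_i a i ^+ 2; set B := \sum_i b i ^+ 2; set C := \sum_i a i * b i.
have A_ge0 : 0 <= A by apply: sumr_ge0 => i _; exact: sqr_ge0.
have [A0 | A_neq0] := eqVneq A 0.
  have a0 i : a i = 0.
    apply/eqP; rewrite -sqrf_eq0; apply/eqP.
    by apply: (psumr_eq0P _ A0) => // j _; exact: sqr_ge0.
  rewrite /C big1 => [|i _]; last by rewrite a0 mul0r.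
  by rewrite expr0n A0 mul0r.
(* Lagrange: 0 <= sum_i (A b_i - C a_i)^2 = A (A B - C^2). *)
have lagrange : \sum_i (A * b i - C * a i) ^+ 2 = A * (A * B - C ^+ 2).
  rewrite (eq_bigr (fun i => A ^+ 2 * b i ^+ 2 - (A * C) * (a i * b i) *+ 2
                             + C ^+ 2 * a i ^+ 2)) => [|i _]; last by ring.
  rewrite big_split sumrB /= sumrMnl -!mulr_sumr -/A -/B -/C.
  by ring.
have : 0 <= A * (A * B - C ^+ 2).
  by rewrite -lagrange; apply: sumr_ge0 => i _; exact: sqr_ge0.
by rewrite pmulr_rge0 ?subr_ge0 // lt_def A_neq0.
Qed.

Lemma sqnorm_ge0 c (x : 'cV[R]_c) : 0 <= sqnorm x.
Proof. by apply: sumr_ge0 => i _; exact: sqr_ge0. Qed.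

Lemma sqnorm_eq0 c (x : 'cV[R]_c) : sqnorm x = 0 -> x = 0.
Proof.
move=> x0; apply/matrixP => i j; rewrite (ord1 j) mxE; apply/eqP.
by rewrite -sqrf_eq0; apply/eqP; apply: (psumr_eq0P _ x0) => // k _; exact: sqr_ge0.
Qed.

Lemma sqnorm0 c : sqnorm (0 : 'cV[R]_c) = 0.
Proof. by rewrite /sqnorm big1 // => i _; rewrite mxE expr0n. Qed.

Lemma sqnormN c (x : 'cV[R]_c) : sqnorm (- x) = sqnorm x.
Proof. by apply: eq_bigr => i _; rewrite mxE sqrrN. Qed.

Lemma sqnormD_le c (x y : 'cV[R]_c) : sqnorm (x + y) <= (sqnorm x + sqnorm y) *+ 2.
Proof.
rewrite /sqnorm -big_split -sumrMnl /=; apply: ler_sum => i _.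
rewrite mxE sqrrD addrAC [_ *+ 2]mulr2n lerD2l.
exact: leif_mean_square_scaled.
Qed.

Lemma sqnorm_col_mx c1 c2 (x : 'cV[R]_c1) (y : 'cV[R]_c2) :
  sqnorm (col_mx x y) = sqnorm x + sqnorm y.
Proof.
by rewrite /sqnorm big_split_ord /=; congr (_ + _); apply: eq_bigr => i _;
  rewrite ?col_mxEu ?col_mxEd.
Qed.

Lemma sqnorm_isometry r s (U : 'M[R]_(r, s)) (x : 'cV[R]_s) :
  U^T *m U = 1%:M -> sqnorm (U *m x) = sqnorm x.
Proof.
have sqnormE k (y : 'cV[R]_k) : sqnorm y = (y^T *m y) 0 0.
  by rewrite /sqnorm !mxE; apply: eq_bigr => i _; rewrite !mxE expr2.
by move=> UU; rewrite !sqnormE trmx_mul mulmxA -(mulmxA x^T) UU mulmx1.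
Qed.

Lemma sqnorm_contract c (x : 'cV[R]_c) a : a < 1 -> sqnorm x <= a * sqnorm x -> x = 0.
Proof.
move=> a_lt1 le_x; apply: sqnorm_eq0; apply/eqP; rewrite eq_le sqnorm_ge0 andbT.
have : (1 - a) * sqnorm x <= 0 by rewrite mulrBl mul1r subr_le0.
by rewrite pmulr_rle0 // subr_gt0.
Qed.

End SquaredNorms.

Section OperatorBounds.
Variable R : realFieldType.

Definition sqbound r s (X : 'M[R]_(r, s)) (c : R) : Prop :=
  forall x : 'cV[R]_s, sqnorm (X *m x) <= c * sqnorm x.

Lemma spec_norm_sqbound r s (X : 'M[R]_(r, s)) e :
  spec_norm_le X e -> sqbound X (e ^+ 2).
Proof. by case. Qed.

Definition frob r s (X : 'M[R]_(r, s)) : R := \sum_i \sum_j X i j ^+ 2.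

Lemma frob_ge0 r s (X : 'M[R]_(r, s)) : 0 <= frob X.
Proof. by apply: sumr_ge0 => i _; apply: sumr_ge0 => j _; exact: sqr_ge0. Qed.

Lemma sqbound_frob r s (X : 'M[R]_(r, s)) : sqbound X (frob X).
Proof.
move=> x; rewrite /sqnorm /frob mulr_suml; apply: ler_sum => i _.
by rewrite mxE; exact: cauchy_schwarz.
Qed.

Lemma frob_tr r s (X : 'M[R]_(r, s)) : frob X^T = frob X.
Proof. by rewrite /frob exchange_big; apply: eq_bigr => i _; apply: eq_bigr => j _; rewrite mxE. Qed.

(* Conversely, testing on the unit vectors, frob X <= s * ||X||^2. *)
Lemma frob_le r s (X : 'M[R]_(r, s)) c : sqbound X c -> frob X <= s%:R * c.
Proof.
move=> Xc; rewrite /frob exchange_big /= mulr_natl -[s in c *+ s]card_ord -sumr_const.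
apply: ler_sum => j _.
have unit_norm : sqnorm (delta_mx j 0 : 'cV[R]_s) = 1.
  rewrite /sqnorm (bigD1 j) //= big1 => [|k kj]; rewrite mxE.
    by rewrite !eqxx expr1n addr0.
  by rewrite (negbTE kj) expr0n.
have := Xc (delta_mx j 0); rewrite unit_norm mulr1; apply: le_trans.
rewrite /sqnorm; apply: ler_sum => i _; rewrite mxE (bigD1 j) //= big1 => [|k kj].
  by rewrite !mxE !eqxx mulr1 addr0.
by rewrite !mxE (negbTE kj) mulr0.
Qed.

(* ||X^T|| = ||X||; we only need the crude bound ||X^T||^2 <= s ||X||^2. *)
Lemma sqbound_tr r s (X : 'M[R]_(r, s)) c : sqbound X c -> sqbound X^T (s%:R * c).
Proof.
move=> Xc y; apply: le_trans (sqbound_frob _ _) _; rewrite frob_tr.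
by apply: ler_wpM2r; [exact: sqnorm_ge0 | exact: frob_le].
Qed.

Lemma sqbound_mul r s t (X : 'M[R]_(r, s)) (Y : 'M[R]_(s, t)) a b :
  0 <= a -> sqbound X a -> sqbound Y b -> sqbound (X *m Y) (a * b).
Proof.
move=> a_ge0 Xa Yb x; rewrite -mulmxA; apply: le_trans (Xa _) _.
by rewrite -mulrA; apply: ler_wpM2l.
Qed.

Lemma sqbound_add r s (X Y : 'M[R]_(r, s)) a b :
  sqbound X a -> sqbound Y b -> sqbound (X + Y) ((a + b) *+ 2).
Proof.
move=> Xa Yb x; rewrite mulmxDl; apply: le_trans (sqnormD_le _ _) _.
by rewrite mulrnAl; apply: ler_wMn2r; rewrite mulrDl; exact: lerD.
Qed.

Lemma sqbound_opp r s (X : 'M[R]_(r, s)) c : sqbound X c -> sqbound (- X) c.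
Proof. by move=> Xc x; rewrite mulNmx sqnormN. Qed.

Lemma sqbound_isometry r s (U : 'M[R]_(r, s)) : U^T *m U = 1%:M -> sqbound U 1.
Proof. by move=> UU x; rewrite sqnorm_isometry // mul1r. Qed.

Lemma sqbound_sparse r s (X : 'M[R]_(r, s)) c :
  (forall i j l, j != l -> X i j * X i l = 0) ->
  (forall i i' j, i != i' -> X i j * X i' j = 0) ->
  (forall i j, X i j ^+ 2 <= c) -> 0 <= c -> sqbound X c.
Proof.
move=> row1 col1 Xc c_ge0 x; rewrite /sqnorm.
have sq_entry i : (X *m x) i 0 ^+ 2 = \sum_j X i j ^+ 2 * x j 0 ^+ 2.
  rewrite mxE expr2 mulr_suml; apply: eq_bigr => j _.
  rewrite mulr_sumr (bigD1 j) //= big1 ?addr0 => [|l lj]; first by rewrite mulrACA -!expr2.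
  by rewrite mulrACA row1 1?eq_sym // mul0r.
rewrite (eq_bigr _ (fun i _ => sq_entry i)) exchange_big /= mulr_sumr.
apply: ler_sum => j _; rewrite -mulr_suml; apply: ler_wpM2r; first exact: sqr_ge0.
have [i Xij | X0] := pickP (fun i => X i j != 0); last first.
  by rewrite big1 // => i _; have /negbFE/eqP-> := X0 i; rewrite expr0n.
rewrite (bigD1 i) //= big1 => [|i' i'i]; first by rewrite addr0; exact: Xc.
by have /eqP := col1 _ _ j i'i; rewrite mulf_eq0 (negbTE Xij) orbF => /eqP->; rewrite expr0n.
Qed.

Lemma sqbound_diag r s (X : 'M[R]_(r, s)) c :
  0 <= c -> (forall (i : 'I_r) (j : 'I_s), (i : nat) <> j -> X i j = 0) ->
  (forall i j, X i j ^+ 2 <= c) -> sqbound X c.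
Proof.
move=> c_ge0 X_diag Xc; apply: sqbound_sparse => // [i j l jl | i i' j ii'].
  have [ij | /eqP ij] := eqVneq (i : nat) j; last by rewrite X_diag ?mul0r.
  by rewrite (X_diag i l) ?mulr0 // ij => /val_inj jl'; rewrite jl' eqxx in jl.
have [ij | /eqP ij] := eqVneq (i : nat) j; last by rewrite X_diag ?mul0r.
by rewrite (X_diag i' j) ?mulr0 // -ij => /val_inj ii''; rewrite ii'' eqxx in ii'.
Qed.

Lemma sqbound_ur_block {r1 r2 s1 s2} (X : 'M[R]_(r1, s2)) c : 0 <= c -> sqbound X c ->
  sqbound (block_mx (0 : 'M_(r1, s1)) X (0 : 'M_(r2, s1)) (0 : 'M_(r2, s2))) c.
Proof.
move=> c_ge0 Xc x; rewrite -{1}[x]vsubmxK mul_block_col !mul0mx add0r addr0.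
rewrite sqnorm_col_mx sqnorm0 addr0; apply: le_trans (Xc _) _; apply: ler_wpM2l => //.
by rewrite -{2}[x]vsubmxK sqnorm_col_mx lerDr sqnorm_ge0.
Qed.

Lemma sqbound_drsubmx r1 r2 s1 s2 (X : 'M[R]_(r1 + r2, s1 + s2)) c :
  sqbound X c -> sqbound (drsubmx X) c.
Proof.
move=> Xc v; have := Xc (col_mx 0 v).
rewrite -{1}[X]submxK mul_block_col !mulmx0 !add0r !sqnorm_col_mx sqnorm0 add0r.
by apply: le_trans; rewrite lerDr sqnorm_ge0.
Qed.

End OperatorBounds.

Lemma perturbed_inverse_identity (R : comNzRingType) a b (K : 'M[R]_(a, b))
    (Kinv N : 'M[R]_(b, a)) (X : 'M[R]_(a, b)) :
  K *m Kinv = 1%:M -> (Kinv + N) *m X = 1%:M -> X + K *m N *m X = K.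
Proof.
move=> KKinv JX.
by rewrite -{2}[K]mulmx1 -JX mulmxDl mulmxDr !mulmxA KKinv mul1mx.
Qed.

Section BlockAlgebra.
Variable R : comNzRingType.
Variables n r2 c1 c2 : nat.

Lemma inverse_blocks (A : 'M[R]_(n, c1)) (B : 'M[R]_(n, c2)) (G : 'M[R]_(r2, c1))
    (D : 'M[R]_(r2, c2)) (Kinv : 'M[R]_(c1 + c2, n + r2)) :
  is_inverse (block_mx A B G D) Kinv ->
  [/\ A *m ulsubmx Kinv + B *m dlsubmx Kinv = 1%:M,
      A *m ursubmx Kinv + B *m drsubmx Kinv = 0 &
      ulsubmx Kinv *m A + ursubmx Kinv *m G = 1%:M].
Proof.
rewrite -[Kinv]submxK /is_inverse !mulmx_block !scalar_mx_block !block_mxKul.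
rewrite !block_mxKur !block_mxKdl !block_mxKdr.
by case=> /eq_block_mx[-> -> _ _] /eq_block_mx[-> _ _ _].
Qed.

(* If P E = 1 and P L = 0, then row_mx P 0 is the top block row of the
   inverse of [E L; H F], whose upper-right block therefore vanishes. *)
Lemma inverse_ur_eq0 (E : 'M[R]_(c1, n)) (L : 'M[R]_(c1, r2)) (H : 'M[R]_(c2, n))
    (F : 'M[R]_(c2, r2)) (X : 'M[R]_(n + r2, c1 + c2)) (P : 'M[R]_(n, c1)) :
  is_inverse (block_mx E L H F) X -> P *m E = 1%:M -> P *m L = 0 -> ursubmx X = 0.
Proof.
move=> [JX _] PE PL.
have PJ : row_mx P 0 *m block_mx E L H F = row_mx 1%:M 0.
  by rewrite mul_row_block PE PL !mul0mx !addr0.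
have : row_mx P 0 = usubmx X.
  rewrite -[row_mx P 0]mulmx1 -JX mulmxA PJ -{1}[X]vsubmxK mul_row_col.
  by rewrite mul1mx mul0mx addr0.
by rewrite /ursubmx => <-; rewrite row_mxKr.
Qed.

Lemma update_blocks (A : 'M[R]_(n, c1)) (B : 'M[R]_(n, c2)) (G : 'M[R]_(r2, c1))
    (D : 'M[R]_(r2, c2)) (Q : 'M[R]_(c1, r2)) (At : 'M[R]_(n, c1))
    (Gt : 'M[R]_(r2, c1)) (Dt : 'M[R]_(r2, c2)) :
  block_mx At 0 Gt Dt + block_mx A B G D *m block_mx 0 Q 0 0 *m block_mx At 0 Gt Dt
    = block_mx A B G D ->
  B = A *m Q *m Dt /\ A - At = A *m Q *m Gt.
Proof.
rewrite !mulmx_block !(mulmx0, mul0mx, addr0, add0r) add_block_mx.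
case/eq_block_mx => ul ur _ _; split; first by rewrite -ur add0r.
by rewrite -{1}ul addrAC subrr add0r.
Qed.

Lemma update_as_sum (Kinv : 'M[R]_(c1 + c2, n + r2)) (L : 'M[R]_(c1, r2)) :
  block_mx (ulsubmx Kinv) L (dlsubmx Kinv) (drsubmx Kinv)
    = Kinv + block_mx 0 (L - ursubmx Kinv) 0 0.
Proof. by rewrite -{4}[Kinv]submxK add_block_mx !addr0 subrKC. Qed.

Lemma updated_inverse (A : 'M[R]_(n, c1)) (B : 'M[R]_(n, c2)) (G : 'M[R]_(r2, c1))
    (D : 'M[R]_(r2, c2)) (Kinv : 'M[R]_(c1 + c2, n + r2)) (L : 'M[R]_(c1, r2))
    (P : 'M[R]_(n, c1)) (X : 'M[R]_(n + r2, c1 + c2)) :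
  is_inverse (block_mx A B G D) Kinv ->
  is_inverse (block_mx (ulsubmx Kinv) L (dlsubmx Kinv) (drsubmx Kinv)) X ->
  P *m ulsubmx Kinv = 1%:M -> P *m L = 0 ->
  [/\ X = block_mx (ulsubmx X) 0 (dlsubmx X) (drsubmx X),
      B = A *m (L - ursubmx Kinv) *m drsubmx X &
      A - ulsubmx X = A *m (L - ursubmx Kinv) *m dlsubmx X].
Proof.
move=> [KKinv _] JX PE PL; have X_eq : X = block_mx (ulsubmx X) 0 (dlsubmx X) (drsubmx X).
  by rewrite -(inverse_ur_eq0 JX PE PL) submxK.
have KNX : X + block_mx A B G D *m block_mx 0 (L - ursubmx Kinv) 0 0 *m X
    = block_mx A B G D.
  by apply: perturbed_inverse_identity KKinv _; rewrite -update_as_sum; case: JX.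
by rewrite X_eq in KNX; have [] := update_blocks KNX.
Qed.

End BlockAlgebra.

Section Invertibility.
Variable R : realFieldType.

Lemma unitmx_of_injective k (W : 'M[R]_k) :
  (forall x : 'cV_k, W *m x = 0 -> x = 0) -> W \in unitmx.
Proof.
move=> Winj; rewrite -unitmx_tr -row_free_unit -kermx_eq0.
apply/eqP/row_matrixP => i; rewrite row0; set r := row i (kermx W^T).
have rW : W *m r^T = 0 by rewrite -[W]trmxK -trmx_mul /r -row_mul mulmx_ker row0 trmx0.
by apply: trmx_inj; rewrite trmx0; exact: Winj.
Qed.

Lemma invertible_of_injective a c (X0 X : 'M[R]_(a, c)) (Y0 : 'M[R]_(c, a)) :
  is_inverse X0 Y0 -> (forall x : 'cV_c, X *m x = 0 -> x = 0) -> invertible X.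
Proof.
move=> [X0Y0 Y0X0] Xinj; set W := Y0 *m X.
have Wu : W \in unitmx.
  apply: unitmx_of_injective => x; rewrite /W -mulmxA => Wx; apply: Xinj.
  by rewrite -[X *m x]mul1mx -X0Y0 -mulmxA Wx mulmx0.
exists (invmx W *m Y0); split; last by rewrite -mulmxA mulVmx.
have -> : X = X0 *m W by rewrite /W mulmxA X0Y0 mul1mx.
by rewrite mulmxA -(mulmxA X0) mulmxV // mulmx1.
Qed.

Lemma invertible_of_lower_bound a c (X0 X : 'M[R]_(a, c)) (Y0 : 'M[R]_(c, a)) k :
  is_inverse X0 Y0 -> (forall x, sqnorm x <= k * sqnorm (X *m x)) -> invertible X.
Proof.
move=> X0Y0 lowX; apply: invertible_of_injective X0Y0 _ => x Xx.
apply: sqnorm_eq0; apply/eqP; rewrite eq_le sqnorm_ge0 andbT.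
by have := lowX x; rewrite Xx sqnorm0 mulr0.
Qed.

Lemma sqbound_inverse a c (X : 'M[R]_(a, c)) (Y : 'M[R]_(c, a)) k :
  is_inverse X Y -> (forall x, sqnorm x <= k * sqnorm (X *m x)) -> sqbound Y k.
Proof. by move=> [XY _] lowX y; rewrite -[in leRHS](mul1mx y) -XY -mulmxA. Qed.

Lemma perturb_lower_bound a b (K0 N : 'M[R]_(a, b)) (Y0 : 'M[R]_(b, a)) c e :
  is_inverse K0 Y0 -> 0 <= c -> sqbound Y0 c -> sqbound N e -> c * e *+ 4 <= 1 ->
  forall x, sqnorm x <= c *+ 4 * sqnorm ((K0 + N) *m x).
Proof.
move=> [_ Y0K0] c_ge0 Y0c Ne small x.
set u := sqnorm x; set k := sqnorm ((K0 + N) *m x).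
have x_eq : x = Y0 *m ((K0 + N) *m x - N *m x).
  by rewrite -mulmxBl addrK mulmxA Y0K0 mul1mx.
have le_u : u <= c * ((k + e * u) *+ 2).
  rewrite {1}/u x_eq; apply: le_trans (Y0c _) _; apply: ler_wpM2l => //.
  by apply: le_trans (sqnormD_le _ _) _; rewrite sqnormN ler_wMn2r // lerD2l.
have absorb : c * e * u *+ 4 <= u.
  by rewrite -mulrnAl ler_piMl // sqnorm_ge0.
move: le_u absorb; lra.
Qed.

(* If |K|^2 |N|^2 < 1, then Kinv + N is still invertible, since
   (Kinv + N) x = 0 forces x = - K N x. *)
Lemma invertible_perturb_inverse a b (K : 'M[R]_(a, b)) (Kinv N : 'M[R]_(b, a)) k s :
  is_inverse K Kinv -> 0 <= k -> sqbound K k -> sqbound N s -> k * s < 1 ->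
  invertible (Kinv + N).
Proof.
move=> [KKinv KinvK] k_ge0 Kk Ns small.
apply: (@invertible_of_injective _ _ Kinv _ K) => [|x Jx]; first by split.
have x_eq : x = - (K *m (N *m x)).
  apply/eqP; rewrite -addr_eq0 -{1}[x]mul1mx -KKinv -mulmxA -mulmxDr.
  by rewrite -mulmxDl Jx mulmx0.
apply: sqnorm_contract small _; rewrite {1}x_eq sqnormN -mulrA.
by apply: le_trans (Kk _) _; apply: ler_wpM2l.
Qed.

Lemma invertible_update n r2 c1 c2 (K : 'M[R]_(n + r2, c1 + c2))
    (Kinv : 'M[R]_(c1 + c2, n + r2)) (L : 'M[R]_(c1, r2)) k s :
  is_inverse K Kinv -> 0 <= k -> sqbound K k ->
  0 <= s -> sqbound (L - ursubmx Kinv) s -> k * s < 1 ->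
  invertible (block_mx (ulsubmx Kinv) L (dlsubmx Kinv) (drsubmx Kinv)).
Proof.
move=> KKinv k_ge0 Kk s_ge0 LCs small; rewrite update_as_sum.
exact: invertible_perturb_inverse KKinv k_ge0 Kk (sqbound_ur_block s_ge0 LCs) small.
Qed.

Lemma perturbed_block n r2 c1 c2 (A : 'M[R]_(n, c1)) (B : 'M[R]_(n, c2))
    (G : 'M[R]_(r2, c1)) (D : 'M[R]_(r2, c2)) (Y0 : 'M[R]_(c1 + c2, n + r2)) e :
  is_inverse (block_mx A 0 G D) Y0 -> 0 <= e -> sqbound B e -> frob Y0 * e *+ 4 <= 1 ->
  (forall x, sqnorm x <= frob Y0 *+ 4 * sqnorm (block_mx A B G D *m x)) /\
  sqbound (block_mx A B G D) ((frob (block_mx A 0 G D) + e) *+ 2).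
Proof.
move=> K0Y0 e_ge0 Be small.
have -> : block_mx A B G D = block_mx A 0 G D + block_mx 0 B 0 0.
  by rewrite add_block_mx !addr0 add0r.
split; last exact: sqbound_add (sqbound_frob _) (sqbound_ur_block e_ge0 Be).
exact: perturb_lower_bound K0Y0 (frob_ge0 _) (sqbound_frob _) (sqbound_ur_block e_ge0 Be) small.
Qed.

End Invertibility.

Section CoordinateMatrices.
Variable R : realFieldType.

Definition coord_mx r k (f : 'I_k -> 'I_r) : 'M[R]_(r, k) :=
  \matrix_(i, j) (i == f j)%:R.

Variables (r k : nat) (f : 'I_k -> 'I_r).
Hypothesis f_inj : injective f.

Lemma coord_mx_orthonormal : (coord_mx f)^T *m coord_mx f = 1%:M.
Proof.
apply/matrixP => j l; rewrite !mxE (bigD1 (f j)) //= big1 => [|i ij].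
  by rewrite !mxE eqxx mul1r addr0 (inj_eq f_inj).
by rewrite !mxE (negbTE ij) mul0r.
Qed.

Lemma sqbound_coord_mx_tr : sqbound (coord_mx f)^T 1.
Proof.
apply: sqbound_sparse => [j i i' ii'|j j' i jj'|j i|]; rewrite ?mxE ?ler01 //.
- case: (i =P f j) => [<-|_]; last by rewrite mul0r.
  by rewrite eq_sym (negbTE ii') mulr0.
- case: (i =P f j) => [->|_]; last by rewrite mul0r.
  by rewrite (inj_eq f_inj) (negbTE jj') mulr0.
- by case: (_ == _); rewrite ?expr1n ?expr0n ?ler01.
Qed.

End CoordinateMatrices.
Arguments coord_mx {R r k} f.
Arguments coord_mx_orthonormal {R r k f}.
Arguments sqbound_coord_mx_tr {R r k f}.

Section TruncatedSVD.
Variable R : realFieldType.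
Variables n p m : nat.
Hypotheses (n_gt0 : (0 < n)%N) (p_lt_m : (p < m)%N).
Variables (U : 'M[R]_(n + p)) (V : 'M[R]_m) (S : 'M[R]_(n + p, m)).
Hypotheses (hU : orthogonal_mx U) (hV : orthogonal_mx V) (hS : sv_diag S).

Let C := U *m S *m V^T.
Let L := U *m trunc_sv p S *m V^T.

Lemma p_lt_np : (p < n + p)%N.
Proof. by rewrite -{1}[p]add0n ltn_add2r. Qed.

(* sigma = sigma_(p+1)(C), the largest singular value discarded by L. *)
Definition sigma : R := S (Ordinal p_lt_np) (Ordinal p_lt_m).

Lemma sigma_ge0 : 0 <= sigma.
Proof. by case: hS => _ [S_ge0 _]; exact: S_ge0. Qed.

Lemma sv_tail_le (i : 'I_(n + p)) (j : 'I_m) : (p <= i)%N -> S i j ^+ 2 <= sigma ^+ 2.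
Proof.
move=> p_le_i; case: hS => S_diag [S_ge0 S_decr].
have [ij | ij] := eqVneq (i : nat) j; last by rewrite S_diag ?expr0n ?sqr_ge0 //; apply/eqP.
by rewrite ler_sqr ?nnegrE ?S_ge0 ?sigma_ge0 //; exact: S_decr.
Qed.

(* ||C - L|| = sigma_(p+1)(C): C - L = U (S - S_p) V^T with S - S_p diagonal. *)
Lemma sqbound_trunc_error : sqbound (C - L) (sigma ^+ 2).
Proof.
have tailS : sqbound (S - trunc_sv p S) (sigma ^+ 2).
  case: hS => S_diag _; apply: (sqbound_diag (sqr_ge0 sigma)) => [i j ij|i j].
    by rewrite !mxE; case: ifP; rewrite ?subrr // S_diag // subr0.
  rewrite !mxE; case: ifPn => [_|]; first by rewrite subrr expr0n sqr_ge0.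
  by rewrite subr0 -leqNgt; exact: sv_tail_le.
rewrite /C /L -mulmxBl -mulmxBr -[sigma ^+ 2]mulr1 -[sigma ^+ 2]mul1r.
apply: sqbound_mul; first by rewrite mul1r sqr_ge0.
  by apply: sqbound_mul; [exact: ler01 | exact: sqbound_isometry (proj2 hU) |].
by apply: sqbound_isometry; rewrite trmxK; exact: (proj1 hV).
Qed.

(* Z spans the left singular vectors u_(p+1), ..., u_(n+p) that L discards. *)
Definition tail_coord (j : 'I_n) : 'I_(n + p) := cast_ord (addnC p n) (rshift p j).

Lemma tail_coord_inj : injective tail_coord.
Proof. by move=> j l /cast_ord_inj /rshift_inj. Qed.

Definition Zmx : 'M[R]_(n + p, n) := U *m coord_mx tail_coord.

Lemma Zmx_orthonormal : Zmx^T *m Zmx = 1%:M.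
Proof.
rewrite /Zmx trmx_mul mulmxA -(mulmxA _ U^T) (proj2 hU) mulmx1.
exact: coord_mx_orthonormal tail_coord_inj.
Qed.

Lemma sqbound_Zmx_tr : sqbound Zmx^T 1.
Proof.
rewrite /Zmx trmx_mul -[1]mulr1; apply: sqbound_mul ler01 _ _.
  exact: sqbound_coord_mx_tr tail_coord_inj.
by apply: sqbound_isometry; rewrite trmxK; exact: (proj1 hU).
Qed.

Lemma Zmx_tr_trunc : Zmx^T *m L = 0.
Proof.
rewrite /Zmx /L trmx_mul !mulmxA -(mulmxA _ U^T) (proj2 hU) mulmx1.
suff -> : (coord_mx tail_coord)^T *m trunc_sv p S = 0 by rewrite mul0mx.
apply/matrixP => j k; rewrite !mxE big1 // => i _; rewrite !mxE.
case: (i =P tail_coord j) => [->|_]; last by rewrite mul0r.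
by rewrite /= ltnNge leq_addr mulr0.
Qed.

Lemma sv_lower_bound (a : 'cV[R]_(n + p)) :
  (forall i : 'I_(n + p), (p < i)%N -> a i 0 = 0) ->
  sigma ^+ 2 * sqnorm a <= sqnorm (S^T *m a).
Proof.
move=> a_head; case: hS => S_diag [S_ge0 S_decr].
have sq_entry k : (S^T *m a) k 0 ^+ 2 = \sum_i (S i k * a i 0) ^+ 2.
  rewrite mxE; under eq_bigr do rewrite mxE.
  rewrite expr2 mulr_suml; apply: eq_bigr => i _; rewrite mulr_sumr (bigD1 i) //=.
  rewrite big1 ?addr0 ?expr2 // => i' i'i; rewrite mulrACA.
  have [ik | /eqP ik] := eqVneq (i : nat) k; last by rewrite S_diag ?mul0r.
  rewrite (S_diag i' k) ?mulr0 ?mul0r // => i'k.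
  by case/eqP: i'i; apply: val_inj; rewrite /= i'k.
rewrite /sqnorm (eq_bigr _ (fun k _ => sq_entry k)) exchange_big /= mulr_sumr.
apply: ler_sum => i _; have [p_lt_i | i_le_p] := ltnP p i.
  by rewrite a_head // expr0n mulr0; apply: sumr_ge0 => k _; exact: sqr_ge0.
have i_lt_m : (i < m)%N by apply: leq_ltn_trans p_lt_m.
rewrite (bigD1 (Ordinal i_lt_m)) //=; apply: ler_wpDr.
  by apply: sumr_ge0 => k _; exact: sqr_ge0.
rewrite exprMn; apply: ler_wpM2r; first exact: sqr_ge0.
by rewrite ler_sqr ?nnegrE ?sigma_ge0 ?S_ge0 //; exact: S_decr.
Qed.

(* Dimension count: the span of u_1, ..., u_(p+1) meets the row space of
   A (of dimension n in R^(n+p)) nontrivially, giving y <> 0 with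
   ||C^T A^T y|| >= sigma_(p+1) ||A^T y||. *)
Lemma large_direction (A : 'M[R]_(n, n + p)) (E0 : 'M[R]_(n + p, n)) :
  A *m E0 = 1%:M ->
  exists2 y : 'cV[R]_n, y != 0 &
    sigma ^+ 2 * sqnorm (A^T *m y) <= sqnorm (C^T *m (A^T *m y)).
Proof.
move=> AE0; set Q : 'M[R]_(n + p, p.+1) := coord_mx (widen_ord p_lt_np).
have Q_inj : injective (widen_ord p_lt_np).
  by move=> i j ij; apply: val_inj; exact: (congr1 val ij).
set X1 := Q^T *m U^T.
have rank_X1 : (p.+1 <= \rank X1)%N.
  have := mxrankM_maxl X1 (U *m Q).
  rewrite /X1 mulmxA -(mulmxA Q^T) (proj2 hU) mulmx1 coord_mx_orthonormal //.
  by rewrite mxrank1.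
have rank_A : (n <= \rank A)%N by have := mxrankM_maxl A E0; rewrite AE0 mxrank1.
have cap_neq0 : (X1 :&: A)%MS != 0.
  rewrite -mxrank_eq0; apply/eqP => cap0.
  have := mxrank_sum_cap X1 A; rewrite cap0 addn0 => sum_rank.
  have := rank_leq_col (X1 + A)%MS; rewrite sum_rank => /(leq_trans (leq_add rank_X1 rank_A)).
  by rewrite addSn addnC ltnn.
have [i0 row_i0] : exists i0, row i0 (X1 :&: A)%MS != 0.
  apply/existsP; apply: contraR cap_neq0 => /existsPn row0P.
  by apply/eqP/row_matrixP => i; rewrite row0; apply/eqP; have := row0P i; move/negbNE.
set r := row i0 (X1 :&: A)%MS.
have /submxP [w r_w] : (r <= X1)%MS by apply: submx_trans (row_sub _ _) (capmxSl _ _).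
have /submxP [y' r_y] : (r <= A)%MS by apply: submx_trans (row_sub _ _) (capmxSr _ _).
exists y'^T.
  by apply: contra row_i0 => /eqP y0; rewrite -/r r_y -[y']trmxK y0 trmx0 mul0mx.
have -> : A^T *m y'^T = U *m (Q *m w^T).
  by rewrite -trmx_mul -r_y r_w !trmx_mul !trmxK mulmxA.
rewrite sqnorm_isometry; last exact: (proj2 hU).
rewrite /C !trmx_mul trmxK -!mulmxA (mulmxA U^T U) (proj2 hU) mul1mx.
rewrite [leRHS]sqnorm_isometry; last exact: (proj2 hV).
apply: sv_lower_bound => i p_lt_i; rewrite !mxE big1 // => j _; rewrite !mxE.
case: (i =P widen_ord p_lt_np j) => [ij|_]; last by rewrite mul0r.
by move: p_lt_i; rewrite ij /= ltnNge -ltnS ltn_ord.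
Qed.

(* sigma_(p+1)(C) <= ||A C|| ||A^+||: a matrix C that A (of full row rank n)
   nearly annihilates is close to rank p. *)
Lemma sigma_small (A : 'M[R]_(n, n + p)) (E0 : 'M[R]_(n + p, n)) b g :
  A *m E0 = 1%:M -> 0 <= b -> sqbound (A *m C)^T b -> sqbound E0^T g ->
  sigma ^+ 2 <= b * g.
Proof.
move=> AE0 b_ge0 ACb E0g; have [y y_neq0 large_y] := large_direction AE0.
have y_eq : y = E0^T *m (A^T *m y) by rewrite mulmxA -trmx_mul AE0 trmx1 mul1mx.
have u_gt0 : 0 < sqnorm (A^T *m y).
  rewrite lt_def sqnorm_ge0 andbT; apply: contra y_neq0 => /eqP/sqnorm_eq0 Ay0.
  by rewrite y_eq Ay0 mulmx0.
rewrite -(ler_pM2r u_gt0); apply: le_trans large_y _.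
rewrite mulmxA -trmx_mul; apply: le_trans (ACb _) _; rewrite -mulrA ler_wpM2l //.
by rewrite {1}y_eq; exact: E0g.
Qed.

(* When C is the upper-right block of the inverse of K = [A B; G D], then
   A C = - B F, so sigma_(p+1)(C) <= ||F|| ||B|| ||A^+|| is small with B. *)
Lemma sigma_of_inverse c (A : 'M[R]_(n, n + p)) (B : 'M[R]_(n, c))
    (G : 'M[R]_(m, n + p)) (D : 'M[R]_(m, c)) (Kinv : 'M[R]_(n + p + c, n + m))
    (E0 : 'M[R]_(n + p, n)) k b :
  is_inverse (block_mx A B G D) Kinv -> ursubmx Kinv = C -> A *m E0 = 1%:M ->
  0 <= k -> sqbound Kinv k -> 0 <= b -> sqbound B b ->
  sigma ^+ 2 <= m%:R * k * (c%:R * b) * frob E0^T.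
Proof.
move=> KKinv C_eq AE0 k_ge0 Kk b_ge0 Bb; have [_ ACBF _] := inverse_blocks KKinv.
apply: sigma_small AE0 _ _ (sqbound_frob _).
  by rewrite mulr_ge0 ?mulr_ge0 ?ler0n.
have AC_eq : A *m C = - (B *m drsubmx Kinv) by apply/eqP; rewrite -addr_eq0 -C_eq ACBF.
rewrite AC_eq raddfN /= trmx_mul; apply/sqbound_opp/sqbound_mul.
- by rewrite mulr_ge0 ?ler0n.
- exact/sqbound_tr/sqbound_drsubmx.
- exact: sqbound_tr.
Qed.

(* If E A + C G = 1 and sigma_(p+1)(C) ||G|| < 1, then some P satisfies
   P E = 1 and P L = 0: take P = (Z^T E)^-1 Z^T, where Z^T E is invertible
   because Z^T E A Z = 1 - Z^T (C - L) G Z is a small perturbation of 1. *)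
Lemma left_annihilator (E : 'M[R]_(n + p, n)) (A : 'M[R]_(n, n + p))
    (G : 'M[R]_(m, n + p)) g :
  E *m A + C *m G = 1%:M -> 0 <= g -> sqbound G g -> sigma ^+ 2 * g < 1 ->
  exists P : 'M[R]_(n, n + p), P *m E = 1%:M /\ P *m L = 0.
Proof.
move=> EACG g_ge0 Gg small; set Z := Zmx.
set X1 := Z^T *m (C - L) *m G *m Z.
have X1_bound : sqbound X1 (1 * sigma ^+ 2 * g * 1).
  have s_ge0 : 0 <= 1 * sigma ^+ 2 by rewrite mul1r sqr_ge0.
  apply: sqbound_mul (sqbound_isometry Zmx_orthonormal); first exact: mulr_ge0.
  apply: sqbound_mul Gg => //; apply: sqbound_mul ler01 sqbound_Zmx_tr _.
  exact: sqbound_trunc_error.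
rewrite mulr1 mul1r in X1_bound.
have W1_unit : 1%:M - X1 \in unitmx.
  apply: unitmx_of_injective => x W1x; apply: sqnorm_contract small _.
  have x_eq : x = X1 *m x by apply/eqP; rewrite -subr_eq0 -{1}[x]mul1mx -mulmxBl W1x.
  by rewrite {1}x_eq; exact: X1_bound.
have ZEAZ : Z^T *m E *m (A *m Z) = 1%:M - X1.
  rewrite mulmxA -(mulmxA _ E) -[E *m A](addrK (C *m G)) EACG mulmxBr mulmxBl.
  by rewrite mulmx1 Zmx_orthonormal /X1 mulmxBr Zmx_tr_trunc subr0 !mulmxA.
have ZE_unit : Z^T *m E \in unitmx.
  have ZE_rinv : (Z^T *m E) *m (A *m Z *m invmx (1%:M - X1)) = 1%:M.
    by rewrite mulmxA ZEAZ mulmxV.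
  by case: (mulmx1_unit ZE_rinv).
exists (invmx (Z^T *m E) *m Z^T); split; first by rewrite -mulmxA mulVmx.
by rewrite -mulmxA Zmx_tr_trunc mulmx0.
Qed.

End TruncatedSVD.

Lemma small_parameter (R : realFieldType) (a b c : R) :
  0 <= a -> 0 <= b -> 0 <= c ->
  exists2 e : R, 0 < e & [/\ e ^+ 2 <= 1, a * e ^+ 2 < 1, b * e ^+ 2 < 1 & c * e ^+ 2 < 1].
Proof.
move=> a_ge0 b_ge0 c_ge0; set T := 1 + a + b + c.
have T_ge1 : 1 <= T by rewrite /T -!addrA lerDl !addr_ge0.
have T_gt0 : 0 < T := lt_le_trans ltr01 T_ge1.
have e_le1 : T^-1 <= 1 by rewrite invr_le1 // unitfE gt_eqF.
have e2_le_e : T^-1 ^+ 2 <= T^-1.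
  by rewrite expr2 ler_piMl // invr_ge0 ltW.
have small x : 0 <= x -> x < T -> x * T^-1 ^+ 2 < 1.
  move=> x_ge0 x_lt_T; apply: le_lt_trans (ler_wpM2l x_ge0 e2_le_e) _.
  by rewrite ltr_pdivrMr // mul1r.
have [a_lt_T b_lt_T c_lt_T] : [/\ a < T, b < T & c < T] by rewrite /T; split; lra.
exists T^-1; first by rewrite invr_gt0.
by split; [exact: le_trans e2_le_e e_le1 | exact: small | exact: small | exact: small].
Qed.

Theorem mainTheorem3 (R : rcfType) (M n p : nat)
  (hn : (0 < n)%N) (hp : (0 < p)%N) (hM : (0 < M)%N) (hnpM : (n + p < M)%N)
  (A : 'M[R]_(n, n + p)) (G : 'M[R]_(M - n, n + p)) (D : 'M[R]_(M - n, M - n - p))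
  (hK0 : invertible (block_mx A (0 : 'M[R]_(n, M - n - p)) G D)) :
  exists eps0 : R, 0 < eps0 /\
    forall B : 'M[R]_(n, M - n - p), spec_norm_le B eps0 ->
      invertible (block_mx A B G D) /\
      forall Kinv : 'M[R]_(n + p + (M - n - p), n + (M - n)),
        is_inverse (block_mx A B G D) Kinv ->
        let E := ulsubmx Kinv in
        let C := ursubmx Kinv in
        let H := dlsubmx Kinv in
        let F := drsubmx Kinv in
        forall L : 'M[R]_(n + p, M - n), trunc_svd p C L ->
          invertible (block_mx E L H F) /\
          exists (At : 'M[R]_(n, n + p)) (Gt : 'M[R]_(M - n, n + p))
                 (Dt : 'M[R]_(M - n, M - n - p)),
            is_inverse (block_mx E L H F)
                       (block_mx At (0 : 'M[R]_(n, M - n - p)) Gt Dt) /\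
            B = A *m (L - C) *m Dt /\
            A - At = A *m (L - C) *m Gt.
Proof.
case: hK0 => Y0 hY0; set K0 := block_mx A 0 G D in hY0.
have p_lt_m : (p < M - n)%N by rewrite ltn_subRL.
have [AE0 _ _] := inverse_blocks hY0; rewrite mul0mx addr0 in AE0.
(* cK bounds |K^-1|^2, and sigma_(p+1)(C)^2 <= kap |B|^2. *)
set cK := frob Y0 *+ 4; set cJ := (frob K0 + 1) *+ 2.
set kap := (M - n)%:R * cK * (M - n - p)%:R * frob (ulsubmx Y0)^T.
have cK_ge0 : 0 <= cK by rewrite mulrn_wge0 ?frob_ge0.
have cJ_ge0 : 0 <= cJ by rewrite mulrn_wge0 ?addr_ge0 ?frob_ge0.
have kap_ge0 : 0 <= kap by rewrite !mulr_ge0 ?ler0n ?frob_ge0.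
have [e e_gt0 [e2_le1 smallK smallZ smallJ]] :=
  small_parameter cK_ge0 (mulr_ge0 kap_ge0 (frob_ge0 G)) (mulr_ge0 cJ_ge0 kap_ge0).
exists e; split => // B /spec_norm_sqbound hB.
have smallK' : frob Y0 * e ^+ 2 *+ 4 <= 1 by rewrite -mulrnAl ltW.
have [lowK K_bound] := perturbed_block hY0 (sqr_ge0 e) hB smallK'.
split; first exact: invertible_of_lower_bound hY0 lowK.
move=> Kinv hKinv E C H F L [U [V [S [hU [hV [hS [C_svd L_svd]]]]]]].
set sg := sigma hn p_lt_m S.
have sg_small : sg ^+ 2 <= kap * e ^+ 2.
  have := sigma_of_inverse hn p_lt_m hU hV hS hKinv C_svd AE0 cK_ge0
    (sqbound_inverse hKinv lowK) (sqr_ge0 e) hB.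
  suff -> : (M - n)%:R * cK * ((M - n - p)%:R * e ^+ 2) * frob (ulsubmx Y0)^T
    = kap * e ^+ 2 by [].
  by rewrite /kap; ring.
have [P PE PL] : exists2 P : 'M_(n, n + p), P *m E = 1%:M & P *m L = 0.
  have [_ _ EACG] := inverse_blocks hKinv; rewrite -/C C_svd in EACG.
  have small_sgG : sg ^+ 2 * frob G < 1.
    by apply: le_lt_trans smallZ; rewrite [leRHS]mulrAC ler_wpM2r ?frob_ge0.
  have [P [PE PL]] := left_annihilator hU hV hS EACG (frob_ge0 G) (sqbound_frob G) small_sgG.
  by exists P; rewrite // L_svd.
have Jinv : invertible (block_mx E L H F).
  apply: (invertible_update hKinv _ K_bound (sqr_ge0 sg)).
  - by rewrite mulrn_wge0 ?addr_ge0 ?frob_ge0 ?sqr_ge0.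
  - by rewrite -/C C_svd L_svd -opprB; apply/sqbound_opp/sqbound_trunc_error.
  - apply: le_lt_trans smallJ; rewrite -mulrA; apply: ler_pM; rewrite ?sqr_ge0 //.
      by rewrite mulrn_wge0 ?addr_ge0 ?frob_ge0 ?sqr_ge0.
    by rewrite ler_wMn2r // lerD2l.
split => //; case: Jinv => X hX; have [X_eq B_eq A_eq] := updated_inverse hKinv hX PE PL.
by exists (ulsubmx X), (dlsubmx X), (drsubmx X); rewrite -X_eq.
Qed.
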